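(* Let $0<q\leq 1$, let $D\in\mathbb{R}^{n\times d}$ be a frame with frame bounds $0<\mathcal{L}\leq\mathcal{U}<\infty$, $\kappa=\mathcal{U}/\mathcal{L}$, let $A\in\mathbb{R}^{m\times n}$, and let $s<a$ be positive integers. Assume $A$ satisfies the $(D^{\dagger},q)$-RIP of order $s+a$ (with constants $\delta_a$ and $\delta_{s+a}<1$), and let $\Delta=\frac{1+\delta_a}{1-\delta_{s+a}}$. Let $h\in\mathbb{R}^n$ be arbitrary with associated index sets $T=T_0,T_1,\dots$ and $T_{01}=T_0\cup T_1$ as in the context. Then $$\|D_{T_{01}}^*h\|_2^{q}\leq 2^{-q/2}\left(1+\sqrt{1+4\kappa^{-2}\Delta^{-2/q}}\right)^{q/2}\kappa^q\Delta\, a^{q/2-1}\left(\|D_{T^c}^*h\|_q^q+\frac{\mathcal{L}^{q/2}a^{1-q/2}\|Ah\|_q^q}{1+\delta_a}\right).$$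
   Context: $D$ is a frame with frame bounds $\mathcal{L},\mathcal{U}$ if $\mathcal{L}\|f\|_2^2\leq\|D^*f\|_2^2\leq\mathcal{U}\|f\|_2^2$ for all $f\in\mathbb{R}^n$; $D^{\dagger}=(DD^* )^{-1}D$. $A$ obeys the $(D^\dagger,q)$-RIP of order $k$ with constant $\delta\in[0,1)$ if $(1-\delta)\|D^\dagger v\|_2^q\leq\|AD^\dagger v\|_q^q\leq(1+\delta)\|D^\dagger v\|_2^q$ for all $v\in\mathbb{R}^d$ with at most $k$ nonzero entries; $\delta_k$ is the smallest such $\delta$. Index sets: write $D^*h=(x_1,\dots,x_d)^T$, reorder so that $|x_1|\geq\cdots\geq|x_d|$; $T=T_0=\{1,\dots,s\}$, $T_1=\{s+1,\dots,s+a\}$, $T_i=\{s+(i-1)a+1,\dots,s+ia\}$ for $i\geq2$ (last possibly smaller), $T_{01}=T_0\cup T_1$, $T^c=[d]\setminus T$. For $S\subset[d]$, $D_S^*h$ denotes $D^*h$ restricted to $S$ (entries outside $S$ set to zero). *)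

From HB Require Import structures.
From mathcomp Require Import all_boot all_order all_algebra.
From mathcomp Require Import perm reals exp.
Set Implicit Arguments. Unset Strict Implicit. Unset Printing Implicit Defensive.
Import Order.TTheory GRing.Theory Num.Theory.
Local Open Scope ring_scope.

Section Defs.
Variable R : realType.

Definition norm2 {k} (x : 'cV[R]_k) : R := Num.sqrt (\sum_i (x i 0) ^+ 2).
Definition normqq {k} (q : R) (x : 'cV[R]_k) : R := \sum_i `|x i 0| `^ q.

(* D_S^* x : x restricted to S (entries outside S set to zero) *)
Definition restr {k} (S : {set 'I_k}) (x : 'cV[R]_k) : 'cV[R]_k :=
  \col_i (if i \in S then x i 0 else 0).

Definition sparse {k} (K : nat) (v : 'cV[R]_k) : Prop :=
  (#|[set i | v i ord0 != 0%R]| <= K)%N.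

Definition frame {n d} (D : 'M[R]_(n, d)) (L U : R) : Prop :=
  forall f : 'cV[R]_n,
    L * norm2 f ^+ 2 <= norm2 (D^T *m f) ^+ 2 /\
    norm2 (D^T *m f) ^+ 2 <= U * norm2 f ^+ 2.

Definition pinvD {n d} (D : 'M[R]_(n, d)) : 'M[R]_(n, d) :=
  invmx (D *m D^T) *m D.

Definition DqRIP {m n d} (A : 'M[R]_(m, n)) (D : 'M[R]_(n, d)) (q : R)
    (k : nat) (delta : R) : Prop :=
  0 <= delta /\ delta < 1 /\
  forall v : 'cV[R]_d, sparse k v ->
    (1 - delta) * norm2 (pinvD D *m v) `^ q <= normqq q (A *m (pinvD D *m v)) /\
    normqq q (A *m (pinvD D *m v)) <= (1 + delta) * norm2 (pinvD D *m v) `^ q.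

Definition RIP_const {m n d} (A : 'M[R]_(m, n)) (D : 'M[R]_(n, d)) (q : R)
    (k : nat) (delta : R) : Prop :=
  DqRIP A D q k delta /\
  forall delta', DqRIP A D q k delta' -> delta <= delta'.

Definition nonincr_order {k} (x : 'cV[R]_k) (sigma : {perm 'I_k}) : Prop :=
  forall i j : 'I_k, (i <= j)%N -> `|x (sigma j) 0| <= `|x (sigma i) 0|.

End Defs.

(* T_0 = indices of the s largest entries, T_1 = the next a entries (0-based) *)
Definition T0 {k} (sigma : {perm 'I_k}) (s : nat) : {set 'I_k} :=
  [set sigma i | i : 'I_k & (i < s)%N].
Definition T1 {k} (sigma : {perm 'I_k}) (s a : nat) : {set 'I_k} :=
  [set sigma i | i : 'I_k & (s <= i < s + a)%N].

From HB Require Import structures.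
From mathcomp Require Import all_boot all_order all_algebra.
From mathcomp Require Import perm reals exp.
From mathcomp Require Import zify ring lra.
Set Implicit Arguments. Unset Strict Implicit. Unset Printing Implicit Defensive.
Import Order.TTheory GRing.Theory Num.Theory.
Local Open Scope ring_scope.

(* Write x = D^* h, u = x restricted to T01 and g = D^dagger u.  The entries
   of x decrease along sigma, so every entry of a block T_(j+2) is bounded by
   the q-mean of T_(j+1); hence sum_j ||x_(T_(j+2))||_2^q <= a^(q/2-1) ||x_(T^c)||_q^q.
   Since D^dagger D^* = 1, h = D^dagger x is g plus the images of the blocks
   T_(j+2), and the lower RIP bound on u together with the upper RIP bound on
   each block give (L ||g||_2^2)^(q/2) <= Delta V, where
   V = a^(q/2-1) (||x_(T^c)||_q^q + L^(q/2) a^(1-q/2) ||Ah||_q^q / (1 + delta_a))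
   also bounds ||x_(T01^c)||_2^q.  Finally
   ||u||^2 = <x, u> = <D^* h, D^* g> <= sqrt U ||g|| (||u||^2 + ||x_(T01^c)||^2)^(1/2)
   is a quadratic inequality in ||u||^2, whose larger root gives the bound. *)

Section PowR.
Variable R : realType.
Implicit Types p x y z : R.

Lemma ge0_ger1_powR p x : 0 <= x <= 1 -> p <= 1 -> x <= x `^ p.
Proof.
case/andP; rewrite le_eqVlt => /predU1P[<- _ _|x0 x1 p1]; first exact: powR_ge0.
by apply: ger1_powR; rewrite ?x0.
Qed.

Lemma powR_subadd p x y : 0 < p -> p <= 1 -> 0 <= x -> 0 <= y ->
  (x + y) `^ p <= x `^ p + y `^ p.
Proof.
move=> p0 p1 x0 y0; have [xy0|xy0] := eqVneq (x + y) 0.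
  have [-> ->] : x = 0 /\ y = 0 by split; lra.
  by rewrite addr0 lerDl powR_ge0.
have z0 : 0 < x + y by rewrite lt_def xy0 addr_ge0.
have xz : x / (x + y) <= (x / (x + y)) `^ p.
  by apply: ge0_ger1_powR => //; rewrite divr_ge0 ?ler_pdivrMr ?mul1r //=; lra.
have yz : y / (x + y) <= (y / (x + y)) `^ p.
  by apply: ge0_ger1_powR => //; rewrite divr_ge0 ?ler_pdivrMr ?mul1r //=; lra.
rewrite -[x in x `^ p + _](divfK xy0) -[y in _ + y `^ p](divfK xy0).
rewrite !(powRM p _ (ltW z0)) ?divr_ge0 ?(ltW z0) // -mulrDl ler_peMl ?powR_ge0 //.
by apply: le_trans (lerD xz yz); rewrite -mulrDl divff.
Qed.

Lemma powR_sum_subadd (I : Type) (r : seq I) (P : pred I) (F : I -> R) p :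
  0 < p -> p <= 1 -> (forall i, 0 <= F i) ->
  (\sum_(i <- r | P i) F i) `^ p <= \sum_(i <- r | P i) F i `^ p.
Proof.
move=> p0 p1 F0; elim: r => [|i r IH]; first by rewrite !big_nil powR0 ?gt_eqF.
rewrite !big_cons; case: (P i) => //.
apply: le_trans (powR_subadd p0 p1 (F0 i) (sumr_ge0 _ (fun j _ => F0 j))) _.
by rewrite lerD2l.
Qed.

Lemma ler_powR2r p x y : 0 <= p -> 0 <= x -> x <= y -> x `^ p <= y `^ p.
Proof. by move=> p0 x0 xy; apply: ge0_ler_powR; rewrite ?nnegrE // (le_trans x0). Qed.

Lemma powR_le_powRV p x y : 0 < p -> 0 <= x -> 0 <= y -> x `^ p <= y -> x <= y `^ p^-1.
Proof.
move=> p0 x0 y0 xy; rewrite -[x](powRr1 x0) -(mulfV (lt0r_neq0 p0)) powRrM.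
by apply: ler_powR2r; rewrite ?invr_ge0 ?powR_ge0 // ltW.
Qed.

Lemma powRVK p x : p != 0 -> 0 <= x -> (x `^ p^-1) `^ p = x.
Proof. by move=> p0 x0; rewrite -powRrM mulVf // powRr1. Qed.

Lemma sqr_powR p x : 0 <= x -> (x ^+ 2) `^ (p / 2) = x `^ p.
Proof. by move=> x0; rewrite -powR_mulrn // -powRrM mulrCA divff ?mulr1 ?pnatr_eq0. Qed.

End PowR.

Section ColumnVectors.
Variable R : realType.

Definition dotv k (u v : 'cV[R]_k) : R := (u^T *m v) 0 0.

Section FixedDimension.
Variable k : nat.
Implicit Types (u v x : 'cV[R]_k) (S : {set 'I_k}).

Lemma dotvE u v : dotv u v = \sum_i u i 0 * v i 0.
Proof. by rewrite /dotv mxE; apply: eq_bigr => i _; rewrite mxE. Qed.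

Lemma dotvC u v : dotv u v = dotv v u.
Proof. by rewrite !dotvE; apply: eq_bigr => i _; rewrite mulrC. Qed.

Lemma norm2_ge0 v : 0 <= norm2 v.
Proof. exact: sqrtr_ge0. Qed.

Lemma norm2_sqr v : norm2 v ^+ 2 = \sum_i v i 0 ^+ 2.
Proof. by rewrite sqr_sqrtr // sumr_ge0 // => i _; rewrite sqr_ge0. Qed.

Lemma norm2_dotv v : norm2 v ^+ 2 = dotv v v.
Proof. by rewrite norm2_sqr dotvE; apply: eq_bigr => i _; rewrite expr2. Qed.

Lemma norm2_eq0 v : (norm2 v == 0) = (v == 0).
Proof.
apply/idP/eqP => [|->]; last by rewrite /norm2 big1 ?sqrtr0 // => i _; rewrite mxE expr0n.
rewrite -sqrf_eq0 norm2_sqr psumr_eq0 => [/allP v0|i _]; last exact: sqr_ge0.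
apply/matrixP => i j; rewrite (ord1 j) mxE; apply/eqP.
by rewrite -sqrf_eq0; apply: v0 (mem_index_enum i).
Qed.

Lemma dotv_sqr_le u v : dotv u v ^+ 2 <= norm2 u ^+ 2 * norm2 v ^+ 2.
Proof.
set C := dotv u v; set B := norm2 v ^+ 2.
have [B0|B0] := eqVneq B 0.
  move/eqP: B0; rewrite /B sqrf_eq0 norm2_eq0 => /eqP v0.
  rewrite /C v0 dotvE big1 => [|i _]; last by rewrite mxE mulr0.
  by rewrite expr0n /= mulr_ge0 ?sqr_ge0.
have Bpos : 0 < B by rewrite lt_def B0 sqr_ge0.
have E : norm2 (B *: u - C *: v) ^+ 2 = B * (B * norm2 u ^+ 2 - C ^+ 2).
  rewrite norm2_sqr [norm2 u ^+ 2]norm2_sqr /C dotvE /B norm2_sqr.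
  set Su := \sum_i u i 0 ^+ 2; set Sv := \sum_i v i 0 ^+ 2.
  set Suv := \sum_i u i 0 * v i 0.
  under eq_bigr => i _ do rewrite !mxE.
  transitivity (\sum_i (Sv ^+ 2 * u i 0 ^+ 2 - 2 * Sv * Suv * (u i 0 * v i 0)
                        + Suv ^+ 2 * v i 0 ^+ 2)).
    by apply: eq_bigr => i _; ring.
  by rewrite big_split sumrB /= -!mulr_sumr -/Su -/Sv -/Suv; ring.
have := sqr_ge0 (norm2 (B *: u - C *: v)).
by rewrite E pmulr_rge0 // subr_ge0 mulrC.
Qed.

Section QuasiNorm.
Variable q : R.
Hypotheses (q0 : 0 < q) (q1 : q <= 1).

Lemma normqq_ge0 v : 0 <= normqq q v.
Proof. by apply: sumr_ge0 => i _; apply: powR_ge0. Qed.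

Lemma normqqN v : normqq q (- v) = normqq q v.
Proof. by apply: eq_bigr => i _; rewrite mxE normrN. Qed.

Lemma normqq0 : normqq q (0 : 'cV[R]_k) = 0.
Proof. by rewrite /normqq big1 // => i _; rewrite mxE normr0 powR0 // gt_eqF. Qed.

Lemma normqqD u v : normqq q (u + v) <= normqq q u + normqq q v.
Proof.
rewrite /normqq -big_split /=; apply: ler_sum => i _; rewrite mxE.
apply: le_trans (powR_subadd q0 q1 (normr_ge0 _) (normr_ge0 _)).
by apply: ler_powR2r; rewrite ?ler_normD // ltW.
Qed.

Lemma normqq_sum (I : Type) (r : seq I) (P : pred I) (V : I -> 'cV[R]_k) :
  normqq q (\sum_(j <- r | P j) V j) <= \sum_(j <- r | P j) normqq q (V j).
Proof.
apply: (big_ind2 (fun x y => normqq q x <= y)); rewrite ?normqq0 //.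
by move=> x1 y1 x2 y2 h1 h2; apply: le_trans (normqqD _ _) (lerD h1 h2).
Qed.

End QuasiNorm.

Lemma sum_restr (f : R -> R) S x : f 0 = 0 ->
  \sum_i f (restr S x i 0) = \sum_(i in S) f (x i 0).
Proof. by move=> f0; rewrite [RHS]big_mkcond; apply: eq_bigr => i _; rewrite mxE; case: ifP. Qed.

Lemma restr_addC S x : restr S x + restr (~: S) x = x.
Proof.
by apply/matrixP => i j; rewrite (ord1 j) !mxE inE; case: (i \in S); rewrite ?addr0 ?add0r.
Qed.

Lemma norm2_restr_addC S x :
  norm2 x ^+ 2 = norm2 (restr S x) ^+ 2 + norm2 (restr (~: S) x) ^+ 2.
Proof.
rewrite !norm2_sqr !(sum_restr (f := fun y => y ^+ 2)) ?expr0n // (bigID (mem S)) /=.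
by congr (_ + _); apply: eq_bigl => i; rewrite inE.
Qed.

Lemma dotv_restr S x : dotv x (restr S x) = norm2 (restr S x) ^+ 2.
Proof.
rewrite dotvE norm2_sqr; apply: eq_bigr => i _.
by rewrite mxE; case: ifP; rewrite ?mulr0 ?expr0n // expr2.
Qed.

Lemma sparse_restr K S x : (#|S| <= K)%N -> sparse K (restr S x).
Proof.
move=> SK; apply: leq_trans SK; apply: subset_leq_card; apply/subsetP => i.
by rewrite !inE mxE; case: (i \in S); rewrite ?eqxx.
Qed.

Lemma norm2_restr_le S x mu : (forall i, i \in S -> `|x i 0| <= mu) ->
  norm2 (restr S x) ^+ 2 <= #|S|%:R * mu ^+ 2.
Proof.
move=> xS; rewrite norm2_sqr (sum_restr (f := fun y => y ^+ 2)) ?expr0n //.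
rewrite mulr_natl -sumr_const; apply: ler_sum => i iS; rewrite -real_normK ?num_real //.
by rewrite lerXn2r ?nnegrE ?(le_trans _ (xS i iS)) ?xS.
Qed.

Section DisjointFamily.
Variables (N : nat) (P : 'I_N -> {set 'I_k}).
Hypothesis disjP : forall j j', j != j' -> [disjoint P j & P j'].

Lemma sum_restr_bigcup x : \sum_j restr (P j) x = restr (\bigcup_j P j) x.
Proof.
apply/matrixP => i c; rewrite (ord1 c) summxE mxE.
rewrite (eq_bigr (fun j => if i \in P j then x i 0 else 0)) => [|j _]; last by rewrite mxE.
rewrite -big_mkcond /=.
case: bigcupP => [[j0 _ ij0]|nij]; last first.
  by rewrite big_pred0 // => j; apply/negP => ij; apply: nij; exists j.
rewrite (big_pred1 j0) // => j; apply/idP/eqP => [ij|->//].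
by apply/eqP; apply: contraTT ij0 => /disjP/disjointFr/(_ ij) ->.
Qed.

Lemma norm2_restr_bigcup x :
  norm2 (restr (\bigcup_j P j) x) ^+ 2 = \sum_j norm2 (restr (P j) x) ^+ 2.
Proof.
rewrite norm2_sqr (sum_restr (f := fun y => y ^+ 2)) ?expr0n // partition_disjoint_bigcup //.
by apply: eq_bigr => j _; rewrite norm2_sqr (sum_restr (f := fun y => y ^+ 2)) ?expr0n.
Qed.

Lemma normqq_restr_bigcup q x : 0 < q ->
  normqq q (restr (\bigcup_j P j) x) = \sum_j normqq q (restr (P j) x).
Proof.
move=> q0; have f0 : `|0 : R| `^ q = 0 by rewrite normr0 powR0 // gt_eqF.
rewrite /normqq (sum_restr (f := fun y => `|y| `^ q)) // partition_disjoint_bigcup //.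
by apply: eq_bigr => j _; rewrite (sum_restr (f := fun y => `|y| `^ q)).
Qed.

End DisjointFamily.

End FixedDimension.

Lemma dotv_trmx m k (M : 'M[R]_(m, k)) (u : 'cV[R]_m) (v : 'cV[R]_k) :
  dotv (M^T *m u) v = dotv u (M *m v).
Proof. by rewrite /dotv trmx_mul trmxK mulmxA. Qed.

End ColumnVectors.

Section LowerFrameBound.
Variables (R : realType) (n d : nat) (D : 'M[R]_(n, d)) (L : R).
Hypotheses (L0 : 0 < L) (DL : forall f, L * norm2 f ^+ 2 <= norm2 (D^T *m f) ^+ 2).

Lemma lower_frame_unitmx : D *m D^T \in unitmx.
Proof.
rewrite unitmxE unitfE; apply/negP => /det0P[v /negP v0 vDD]; apply: v0.
have DDv : D *m (D^T *m v^T) = 0.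
  have sym : (D *m D^T)^T = D *m D^T by rewrite trmx_mul trmxK.
  by rewrite mulmxA -sym -trmx_mul vDD trmx0.
have : norm2 (D^T *m v^T) ^+ 2 = 0.
  by rewrite norm2_dotv dotv_trmx DDv dotvE big1 // => i _; rewrite !mxE mulr0.
move: (DL v^T) => /[swap] -> /=; rewrite pmulr_rle0 // => v0.
by rewrite -trmx_eq0 -norm2_eq0 -sqrf_eq0 eq_le v0 sqr_ge0.
Qed.

Lemma pinvD_mul_trmx : pinvD D *m D^T = 1%:M.
Proof. by rewrite /pinvD -mulmxA mulVmx // lower_frame_unitmx. Qed.

Lemma pinvD_mulK (h : 'cV[R]_n) : pinvD D *m (D^T *m h) = h.
Proof. by rewrite mulmxA pinvD_mul_trmx mul1mx. Qed.

Lemma mul_trmx_pinvD (v : 'cV[R]_d) : D *m (D^T *m (pinvD D *m v)) = D *m v.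
Proof. by rewrite !mulmxA mulmxV ?mul1mx // lower_frame_unitmx. Qed.

Lemma norm2_pinvD_le (v : 'cV[R]_d) : L * norm2 (pinvD D *m v) ^+ 2 <= norm2 v ^+ 2.
Proof.
set w := D^T *m (pinvD D *m v); apply: le_trans (DL _) _; rewrite -/w.
have wv : norm2 w ^+ 2 = dotv w v by rewrite norm2_dotv dotv_trmx mul_trmx_pinvD -dotv_trmx.
have : norm2 w ^+ 2 * norm2 w ^+ 2 <= norm2 w ^+ 2 * norm2 v ^+ 2.
  by rewrite -expr2 {1}wv dotv_sqr_le.
have [->|w0] := eqVneq (norm2 w ^+ 2) 0; first by rewrite sqr_ge0.
by rewrite ler_pM2l // lt_def w0 sqr_ge0.
Qed.

Lemma norm2_pinvD_powR_le q (v : 'cV[R]_d) : 0 < q ->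
  norm2 (pinvD D *m v) `^ q <= L `^ (- (q / 2)) * norm2 v `^ q.
Proof.
move=> q0; have gv : norm2 (pinvD D *m v) ^+ 2 <= L^-1 * norm2 v ^+ 2.
  by rewrite mulrC ler_pdivlMr // mulrC norm2_pinvD_le.
rewrite -(sqr_powR q (norm2_ge0 _)) -(sqr_powR q (norm2_ge0 v)).
apply: le_trans (ler_powR2r _ (sqr_ge0 _) gv) _; first by rewrite divr_ge0 ?ltW.
by rewrite powRM ?invr_ge0 ?sqr_ge0 ?(ltW L0) // -powR_inv1 ?(ltW L0) // -powRrM mulN1r.
Qed.

End LowerFrameBound.

Lemma card_ord_range d lo hi :
  #|[set k : 'I_d | (lo <= k < hi)%N]| = (minn hi d - lo)%N.
Proof.
rewrite cardE -(size_map val) -(size_iota lo (minn hi d - lo)).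
apply/eqP; rewrite eqn_leq; apply/andP; split; apply: uniq_leq_size;
  rewrite ?iota_uniq ?(map_inj_uniq val_inj) ?enum_uniq //.
  move=> y /mapP[[k kd]]; rewrite mem_enum inE /= => /andP[lok khi] ->.
  by rewrite mem_iota; lia.
move=> n; rewrite mem_iota => /andP[lon nhi]; have nd : (n < d)%N by lia.
by apply/mapP; exists (Ordinal nd) => //; rewrite mem_enum inE /=; lia.
Qed.

Section Blocks.
Variables (d : nat) (sigma : {perm 'I_d}) (s a : nat).

Definition sorted_pos (i : 'I_d) : nat := (sigma^-1)%g i.

(* [block j] is the paper's T_(j+1); in particular [block 0 = T1 sigma s a]. *)
Definition block (j : nat) : {set 'I_d} :=
  [set i | (s + j * a <= sorted_pos i < s + j.+1 * a)%N].

Lemma sorted_pos_ltn i : (sorted_pos i < d)%N.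
Proof. exact: ltn_ord. Qed.

Lemma mem_imset_perm (A : {pred 'I_d}) i :
  (i \in [set sigma k | k in A]) = ((sigma^-1)%g i \in A).
Proof.
apply/imsetP/idP => [[k Ak ->]|Ai]; first by rewrite permK.
by exists ((sigma^-1)%g i); rewrite ?permKV.
Qed.

Lemma mem_T0 i : (i \in T0 sigma s) = (sorted_pos i < s)%N.
Proof. by rewrite mem_imset_perm inE. Qed.

Lemma mem_T01 i : (i \in T0 sigma s :|: T1 sigma s a) = (sorted_pos i < s + a)%N.
Proof. by rewrite inE mem_T0 mem_imset_perm inE; case: ltnP => //= /ltn_addr ->. Qed.

Lemma card_block j : #|block j| = (minn (s + j.+1 * a) d - (s + j * a))%N.
Proof.
rewrite -card_ord_range -[RHS](card_imset _ (@perm_inj _ sigma)); apply: eq_card => i.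
by rewrite mem_imset_perm !inE.
Qed.

Lemma card_T01 : (#|T0 sigma s :|: T1 sigma s a| <= s + a)%N.
Proof.
have -> : T0 sigma s :|: T1 sigma s a = sigma @: [set k : 'I_d | (0 <= k < s + a)%N].
  by apply/setP => i; rewrite mem_T01 mem_imset_perm inE.
by rewrite card_imset ?card_ord_range; [lia | exact: perm_inj].
Qed.

Lemma card_block_le j : (#|block j| <= a)%N.
Proof. by rewrite card_block mulSn; lia. Qed.

Hypothesis a0 : (0 < a)%N.

Lemma mem_block j i : (i \in block j) = (s <= sorted_pos i)%N && (j == (sorted_pos i - s) %/ a)%N.
Proof.
rewrite inE; have [spi|] := leqP s (sorted_pos i); last by lia.
rewrite eqn_leq leq_divRL // -[(_ <= j)%N]/((_ < j.+1)%N) ltn_divLR //; lia.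
Qed.

Lemma block_disjoint j j' : j != j' -> [disjoint block j & block j'].
Proof.
move=> jj'; apply/pred0P => i /=; rewrite !mem_block.
by apply/negP => /andP[/andP[_ /eqP ji] /andP[_ /eqP j'i]]; rewrite ji j'i eqxx in jj'.
Qed.

Lemma bigcup_block : \bigcup_(j < d) block j = ~: T0 sigma s.
Proof.
apply/setP => i; rewrite inE mem_T0 -leqNgt; apply/bigcupP/idP => [[j _]|spi].
  by rewrite mem_block => /andP[].
have jd : ((sorted_pos i - s) %/ a < d)%N.
  by apply: leq_ltn_trans (leq_div _ _) _; have := sorted_pos_ltn i; lia.
by exists (Ordinal jd); rewrite // mem_block spi /=.
Qed.

Lemma bigcup_block_tail : \bigcup_(j < d) block j.+1 = ~: (T0 sigma s :|: T1 sigma s a).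
Proof.
apply/setP => i; rewrite inE mem_T01 -leqNgt; apply/bigcupP/idP => [[j _]|spi].
  by rewrite inE mulSn => /andP[]; lia.
have q1 : (0 < (sorted_pos i - s) %/ a)%N by rewrite divn_gt0 //; lia.
have jd : ((sorted_pos i - s) %/ a - 1 < d)%N.
  by have := leq_div (sorted_pos i - s) a; have := sorted_pos_ltn i; lia.
by exists (Ordinal jd); rewrite // mem_block /= subn1 prednK // eqxx andbT; lia.
Qed.

Section NonincreasingVector.
Variables (R : realType) (x : 'cV[R]_d) (q : R).
Hypotheses (q0 : 0 < q) (x_nonincr : nonincr_order x sigma).

Lemma nonincr_pos i k : (sorted_pos k <= sorted_pos i)%N -> `|x i 0| <= `|x k 0|.
Proof. by move=> ki; have := x_nonincr ki; rewrite !permKV. Qed.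

Lemma block_succ_avg j i : i \in block j.+1 ->
  a%:R * `|x i 0| `^ q <= normqq q (restr (block j) x).
Proof.
move=> ij; have cj : #|block j| = a.
  by move: ij (sorted_pos_ltn i); rewrite inE card_block !mulSn; lia.
rewrite /normqq (sum_restr (f := fun y => `|y| `^ q)) ?normr0 ?powR0 ?gt_eqF //.
rewrite -cj mulr_natl -sumr_const; apply: ler_sum => k kj.
apply: ler_powR2r; [exact: ltW | exact: normr_ge0 | apply: nonincr_pos].
by move: ij kj; rewrite !inE; lia.
Qed.

Lemma norm2_block_succ_le j :
  norm2 (restr (block j.+1) x) `^ q <= a%:R `^ (q / 2 - 1) * normqq q (restr (block j) x).
Proof.
set p := normqq q (restr (block j) x); set mu := (p / a%:R) `^ q^-1.
have ap : 0 < a%:R :> R by rewrite ltr0n.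
have pa0 : 0 <= p / a%:R by rewrite divr_ge0 ?normqq_ge0 ?ltW.
have xmu i : i \in block j.+1 -> `|x i 0| <= mu.
  by move/block_succ_avg=> ai; apply: powR_le_powRV; rewrite // ler_pdivlMr // mulrC.
have nB : norm2 (restr (block j.+1) x) ^+ 2 <= a%:R * mu ^+ 2.
  apply: le_trans (norm2_restr_le xmu) _.
  by rewrite ler_wpM2r ?sqr_ge0 ?ler_nat ?card_block_le.
rewrite -(sqr_powR q (norm2_ge0 _)).
apply: le_trans (ler_powR2r _ (sqr_ge0 _) nB) _; first by rewrite divr_ge0 ?ltW.
rewrite powRM ?(ltW ap) ?sqr_ge0 // sqr_powR ?powR_ge0 // powRVK ?gt_eqF //.
by rewrite powRB ?(gt_eqF ap) ?implybT // powRr1 ?(ltW ap) // mulrA mulrAC.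
Qed.

End NonincreasingVector.

End Blocks.

Lemma quadratic_le_root (R : rcfType) (Z M b : R) : 0 <= M -> 0 <= b ->
  Z ^+ 2 <= M * Z + M ^+ 2 * b -> Z <= M * (1 + Num.sqrt (1 + 4 * b)) / 2.
Proof.
move=> M0 b0 HZ; set r := Num.sqrt _.
have r0 : 0 <= r := sqrtr_ge0 _.
have r2 : r ^+ 2 = 1 + 4 * b by rewrite sqr_sqrtr //; lra.
rewrite leNgt; apply/negP => Zr.
have Mr : 0 <= M * r by rewrite mulr_ge0.
nra.
Qed.

Lemma quartic_powR_bound (R : realType) (q kappa Delta V X c w : R) :
  0 < q -> 1 <= kappa -> 0 < Delta -> 0 <= V -> 0 <= X -> 0 <= c -> 0 <= w ->
  X ^+ 4 <= kappa * c * (X ^+ 2 + w ^+ 2) ->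
  c `^ (q / 2) <= Delta * V -> w `^ q <= V ->
  X `^ q <= 2 `^ (- (q / 2)) * (1 + Num.sqrt (1 + 4 * kappa ^- 2 * Delta `^ (- (2 / q))))
              `^ (q / 2) * kappa `^ q * Delta * V.
Proof.
move=> q0 k1 D0 V0 X0 c0 w0 HX hc hw.
have p0 : 0 < q / 2 by rewrite divr_gt0.
have pV : (q / 2)^-1 = 2 / q by rewrite invf_div.
have k0 : 0 < kappa by apply: lt_le_trans k1.
set C := (Delta * V) `^ (2 / q); set W := V `^ (2 / q).
have cC : c <= C by rewrite /C -pV; apply: powR_le_powRV => //; rewrite mulr_ge0 // ltW.
have wW : w ^+ 2 <= W by rewrite /W -pV; apply: powR_le_powRV; rewrite ?sqr_ge0 ?sqr_powR.
set M := kappa ^+ 2 * C; set b := kappa ^- 2 * Delta `^ (- (2 / q)).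
have M0 : 0 <= M by rewrite mulr_ge0 ?sqr_ge0 ?powR_ge0.
have b0 : 0 <= b by rewrite mulr_ge0 ?invr_ge0 ?sqr_ge0 ?powR_ge0.
(* Enlarging kappa to kappa^2 here produces the constants kappa^q and kappa^-2
   of the statement. *)
have HX2 : (X ^+ 2) ^+ 2 <= M * X ^+ 2 + M ^+ 2 * b.
  have -> : M * X ^+ 2 + M ^+ 2 * b = kappa ^+ 2 * C * (X ^+ 2 + W).
    have DW : Delta `^ (2 / q) != 0 by rewrite gt_eqF ?powR_gt0.
    rewrite /M /b powRN /C /W powRM ?(ltW D0) //; field.
    by rewrite DW gt_eqF.
  rewrite -exprM; apply: le_trans HX _; apply: ler_pM.
  - by rewrite mulr_ge0 // ltW.
  - by rewrite addr_ge0 ?sqr_ge0.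
  - by apply: ler_pM; rewrite ?(ltW k0) // expr2 ler_peMl // ltW.
  - by rewrite lerD2l.
have X2 := quadratic_le_root M0 b0 HX2.
rewrite -(sqr_powR q X0); apply: le_trans (ler_powR2r (ltW p0) (sqr_ge0 X) X2) _.
have -> : 4 * kappa ^- 2 * Delta `^ (- (2 / q)) = 4 * b by rewrite mulrA.
have r0 : 0 <= 1 + Num.sqrt (1 + 4 * b) by rewrite addr_ge0 ?sqrtr_ge0.
have Mp : M `^ (q / 2) = kappa `^ q * (Delta * V).
  rewrite /M powRM ?sqr_ge0 ?powR_ge0 // sqr_powR ?(ltW k0) // /C -pV.
  by rewrite powRVK ?gt_eqF // mulr_ge0 // ltW.
have half : (2^-1 : R) `^ (q / 2) = 2 `^ (- (q / 2)) by rewrite -powR_inv1 // -powRrM mulN1r.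
rewrite powRM ?(mulr_ge0 M0 r0) ?invr_ge0 // powRM // Mp half.
by rewrite [leRHS](_ : _ = kappa `^ q * (Delta * V) * (1 + Num.sqrt (1 + 4 * b)) `^ (q / 2)
                            * 2 `^ (- (q / 2))) //; ring.
Qed.

Section HeadBound.
Variables (R : realType) (m n d s a : nat) (q L U : R) (D : 'M[R]_(n, d))
  (A : 'M[R]_(m, n)) (delta_a delta_sa : R) (h : 'cV[R]_n) (sigma : {perm 'I_d}).
Hypotheses (q0 : 0 < q) (q1 : q <= 1) (L0 : 0 < L) (frD : frame D L U) (a0 : (0 < a)%N)
  (ripa : DqRIP A D q a delta_a) (rips : DqRIP A D q (s + a) delta_sa).

Let x := D^T *m h.
Hypothesis x_nonincr : nonincr_order x sigma.

Let DL f : L * norm2 f ^+ 2 <= norm2 (D^T *m f) ^+ 2 := (frD f).1.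
Let T01 := T0 sigma s :|: T1 sigma s a.
Let g := pinvD D *m restr T01 x.
Let tail_q := \sum_(j < d) norm2 (restr (block sigma s a j.+1) x) `^ q.
Let Delta := (1 + delta_a) / (1 - delta_sa).
Let V := a%:R `^ (q / 2 - 1) * (normqq q (restr (~: T0 sigma s) x)
           + L `^ (q / 2) * a%:R `^ (1 - q / 2) * normqq q (A *m h) / (1 + delta_a)).

Lemma tail_q_le : tail_q <= a%:R `^ (q / 2 - 1) * normqq q (restr (~: T0 sigma s) x).
Proof.
rewrite -(bigcup_block sigma s a0) normqq_restr_bigcup //; last exact: block_disjoint.
by rewrite mulr_sumr /tail_q; apply: ler_sum => j _; apply: norm2_block_succ_le.
Qed.

Lemma norm2_tail_le : norm2 (restr (~: T01) x) `^ q <= tail_q.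
Proof.
rewrite -(sqr_powR q (norm2_ge0 _)) -(bigcup_block_tail sigma s a0) norm2_restr_bigcup; last first.
  by move=> j j' jj'; apply: block_disjoint.
have p0 : 0 < q / 2 by rewrite divr_gt0.
have p1 : q / 2 <= 1 by rewrite ler_pdivrMr // mul1r (le_trans q1) // ler1n.
apply: le_trans (powR_sum_subadd _ _ p0 p1 (fun j => sqr_ge0 _)) _.
by rewrite /tail_q; apply: ler_sum => j _; rewrite sqr_powR ?norm2_ge0.
Qed.

Lemma mulmx_A_pinvD_head :
  A *m g = A *m h - \sum_(j < d) A *m (pinvD D *m restr (block sigma s a j.+1) x).
Proof.
rewrite -(pinvD_mulK L0 DL h) -/x -{1}(restr_addC T01 x).
rewrite -(bigcup_block_tail sigma s a0) -sum_restr_bigcup; last first.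
  by move=> j j' jj'; apply: block_disjoint.
by rewrite !mulmxDr !mulmx_sumr addrK.
Qed.

Lemma rip_head_le :
  (1 - delta_sa) * norm2 g `^ q <= normqq q (A *m h) + (1 + delta_a) * L `^ (- (q / 2)) * tail_q.
Proof.
have [_ [_ ripS]] := rips; have [da0 [_ ripA]] := ripa.
apply: le_trans (ripS _ (sparse_restr x (card_T01 sigma s a))).1 _.
rewrite mulmx_A_pinvD_head; apply: le_trans (normqqD q0 q1 _ _) _; rewrite normqqN lerD2l.
apply: le_trans (normqq_sum q0 q1 _ _ _) _; rewrite /tail_q mulr_sumr; apply: ler_sum => j _.
apply: le_trans (ripA _ (sparse_restr x (card_block_le sigma s a j.+1))).2 _.
by rewrite -mulrA ler_wpM2l ?norm2_pinvD_powR_le //; lra.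
Qed.

Lemma head_quartic_le : norm2 (restr T01 x) ^+ 4
  <= U * norm2 g ^+ 2 * (norm2 (restr T01 x) ^+ 2 + norm2 (restr (~: T01) x) ^+ 2).
Proof.
have -> : norm2 (restr T01 x) ^+ 4 = dotv (D^T *m g) x ^+ 2.
  rewrite -[4%N]/(2 * 2)%N exprM -dotv_restr /x dotv_trmx.
  by rewrite -(mul_trmx_pinvD L0 DL (restr T01 _)) -dotv_trmx dotvC.
apply: le_trans (dotv_sqr_le _ _) _; rewrite -norm2_restr_addC.
by rewrite ler_wpM2r ?sqr_ge0 // (frD g).2.
Qed.

Lemma frame_head_powR_le : (L * norm2 g ^+ 2) `^ (q / 2) <= Delta * V.
Proof.
have [da0 _] := ripa; have [_ [ds1 _]] := rips.
have dA : 0 < 1 + delta_a by lra.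
have dS : 0 < 1 - delta_sa by lra.
have lq0 : 0 < L `^ (q / 2) by apply: powR_gt0.
have ai0 : 0 < a%:R `^ (1 - q / 2) by apply: powR_gt0; rewrite ltr0n.
have aN : a%:R `^ (q / 2 - 1) = (a%:R `^ (1 - q / 2))^-1 by rewrite -powRN opprB.
have rip_le : (1 - delta_sa) * norm2 g `^ q <= normqq q (A *m h)
    + (1 + delta_a) * (L `^ (q / 2))^-1
      * ((a%:R `^ (1 - q / 2))^-1 * normqq q (restr (~: T0 sigma s) x)).
  apply: le_trans rip_head_le _; rewrite lerD2l -powRN -aN ler_wpM2l ?tail_q_le //.
  by rewrite mulr_ge0 ?powR_ge0 ?ltW.
rewrite powRM ?(ltW L0) ?sqr_ge0 // sqr_powR ?norm2_ge0 // -(ler_pM2l dS) mulrCA.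
apply: le_trans (ler_wpM2l (ltW lq0) rip_le) _.
rewrite [leLHS](_ : _ = (1 - delta_sa) * (Delta * V)) // /Delta /V aN.
by field; rewrite !gt_eqF.
Qed.

Lemma tail_powR_le : norm2 (restr (~: T01) x) `^ q <= V.
Proof.
have [da0 _] := ripa; apply: le_trans norm2_tail_le _; apply: le_trans tail_q_le _.
rewrite ler_wpM2l ?powR_ge0 // lerDl divr_ge0 ?mulr_ge0 ?powR_ge0 ?normqq_ge0 //.
by rewrite addr_ge0.
Qed.

End HeadBound.

Unset Implicit Arguments.

Theorem lemma2p7 (R : realType) (m n d s a : nat) (q L U : R)
    (D : 'M[R]_(n, d)) (A : 'M[R]_(m, n)) (delta_a delta_sa : R)
    (h : 'cV[R]_n) (sigma : {perm 'I_d}) :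
  0 < q -> q <= 1 ->
  0 < L -> L <= U -> frame D L U ->
  (0 < s)%N -> (s < a)%N ->
  RIP_const A D q a delta_a ->
  RIP_const A D q (s + a) delta_sa ->
  nonincr_order (D^T *m h) sigma ->
  let kappa := U / L in
  let Delta := (1 + delta_a) / (1 - delta_sa) in
  let x := D^T *m h in
  let T := T0 sigma s in
  let T01 := T :|: T1 sigma s a in
  norm2 (restr T01 x) `^ q <=
    2 `^ (- (q / 2)) * (1 + Num.sqrt (1 + 4 * kappa ^- 2 * Delta `^ (- (2 / q)))) `^ (q / 2)
    * kappa `^ q * Delta * a%:R `^ (q / 2 - 1)
    * (normqq q (restr (~: T) x)
       + L `^ (q / 2) * a%:R `^ (1 - q / 2) * normqq q (A *m h) / (1 + delta_a)).
Proof.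
move=> q0 q1 L0 LU frD _ sa [ripa _] [rips _] x_nonincr; cbv zeta.
have a0 : (0 < a)%N := leq_ltn_trans (leq0n s) sa.
have tailV := tail_powR_le s L q0 q1 a0 ripa x_nonincr.
rewrite -mulrA; apply: (quartic_powR_bound q0 _ _ (le_trans (powR_ge0 _ _) tailV)
  (norm2_ge0 _) _ (norm2_ge0 _) _ (frame_head_powR_le q0 q1 L0 frD a0 ripa rips x_nonincr) tailV).
- by rewrite ler_pdivlMr // mul1r.
- by case: ripa => da0 _; case: rips => _ [ds1 _]; rewrite divr_gt0 //; lra.
- by rewrite mulr_ge0 ?sqr_ge0 // ltW.
- by rewrite mulrA divfK ?gt_eqF // (head_quartic_le s a h sigma L0 frD).
Qed.
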